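(* For $X\in\mathbb{L}^0(\mathbb{R},\mathcal{F})$ let $I(X)=E(X\mid\mathcal{H}):=E(X^+\mid\mathcal{H})-E(X^-\mid\mathcal{H})$. For $X,Y\in\mathbb{L}^0(\mathbb{R},\mathcal{F})$ we have $I(X+Y)=I(X)+I(Y)$ a.s. on the set $F=\bigcup_{i=1}^5F_i\in\mathcal{H}$, where $F_1=\{E(|X|\mid\mathcal{H})\in\mathbb{R},\ E(|Y|\mid\mathcal{H})\in\mathbb{R}\}$, $F_2=\{E(X^+\mid\mathcal{H})=+\infty,\ E(X^-\mid\mathcal{H})\in\mathbb{R},\ E(Y^-\mid\mathcal{H})\in\mathbb{R}\}$, $F_3=\{E(X^-\mid\mathcal{H})=+\infty,\ E(X^+\mid\mathcal{H})\in\mathbb{R},\ E(Y^+\mid\mathcal{H})\in\mathbb{R}\}$, $F_4=\{E(Y^+\mid\mathcal{H})=+\infty,\ E(X^-\mid\mathcal{H})\in\mathbb{R},\ E(Y^-\mid\mathcal{H})\in\mathbb{R}\}$, $F_5=\{E(Y^-\mid\mathcal{H})=+\infty,\ E(X^+\mid\mathcal{H})\in\mathbb{R},\ E(Y^+\mid\mathcal{H})\in\mathbb{R}\}$.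
   Context: Let $(\Omega,\mathcal{F},\mathbb{P})$ be a probability space with $\mathcal{F}$ complete and $\mathcal{H}\subseteq\mathcal{F}$ a complete sub-$\sigma$-algebra. $\mathbb{L}^0(\mathbb{R},\mathcal{F})$ is the set of real-valued $\mathcal{F}$-measurable random variables. For $Z\ge0$, $E(Z\mid\mathcal{H})$ denotes the (generalized) conditional expectation with values in $[0,+\infty]$. $X^+=\max(X,0)$, $X^-=\max(-X,0)$. Arithmetic on $\overline{\mathbb{R}}=\mathbb{R}\cup\{\pm\infty\}$ uses the conventions $r\pm\infty=\pm\infty$ for $r\in\mathbb{R}$, $\infty-\infty=0$, $\infty+\infty=\infty$, $0\times(\pm\infty)=0$. *)

From HB Require Import structures.
From mathcomp Require Import all_boot all_order all_algebra.
From mathcomp Require Import all_classical all_reals all_analysis measurable_realfun.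
Set Implicit Arguments. Unset Strict Implicit. Unset Printing Implicit Defensive.
Import Order.TTheory GRing.Theory Num.Theory.
Local Open Scope classical_set_scope.
Local Open Scope ring_scope.
Local Open Scope ereal_scope.

Definition padd (R : realType) (x y : \bar R) : \bar R :=
  match x, y with
  | +oo, -oo => 0
  | -oo, +oo => 0
  | _, _ => x + y
  end.

Definition psub (R : realType) (x y : \bar R) : \bar R := padd x (- y).

Definition is_sub_sigma_algebra (d : measure_display) (T : measurableType d)
    (H : set (set T)) :=
  sigma_algebra setT H /\ H `<=` measurable.

Definition complete_sub (d : measure_display) (T : measurableType d)
    (R : realType) (P : probability T R) (H : set (set T)) :=
  P.-negligible `<=` H.

Definition H_measurable (d : measure_display) (T : measurableType d)
    (R : realType) (H : set (set T)) (W : T -> \bar R) :=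
  forall B : set (\bar R), @measurable _ (\bar R) B -> H (W @^-1` B).

(* W is a version of the generalized conditional expectation E(Z | H) of the
   nonnegative F-measurable Z: W is [0,+oo]-valued, H-measurable and
   int_A Z dP = int_A W dP for every A in H. *)
Definition is_cond_exp (d : measure_display) (T : measurableType d)
    (R : realType) (P : probability T R) (H : set (set T))
    (Z : T -> R) (W : T -> \bar R) :=
  [/\ forall x, 0 <= W x,
      H_measurable H W &
      forall A, H A ->
        \int[P]_(x in A) (Z x)%:E = \int[P]_(x in A) W x].

Definition is_real (R : realType) (x : \bar R) : Prop := x \is a fin_num.

(* Write S = X + Y. Since S^+ + X^- + Y^- = S^- + X^+ + Y^+ pointwise, additivity and
   almost sure uniqueness of generalized conditional expectations give
   E(S^+|H) + E(X^-|H) + E(Y^-|H) = E(S^-|H) + E(X^+|H) + E(Y^+|H) a.s., and monotonicity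
   adds E(S^+|H) <= E(X^+|H) + E(Y^+|H), E(S^-|H) <= E(X^-|H) + E(Y^-|H) and
   E(X^+|H), E(X^-|H) <= E(|X| | H) (likewise for Y). On F_1 all these terms are finite and
   the identity rearranges into the claim. On F_2 the term E(X^+|H) = +oo forces
   E(S^+|H) = +oo while E(S^-|H) stays finite, so both sides are +oo; F_3, F_4 and F_5 are
   symmetric. Monotonicity comes from comparing integrals over the H-sets where one
   version exceeds the other by a fixed rational gap. *)

From HB Require Import structures.
From mathcomp Require Import all_boot all_order all_algebra.
From mathcomp Require Import all_classical all_reals all_analysis measurable_realfun.
From mathcomp Require Import lra.
Set Implicit Arguments. Unset Strict Implicit. Unset Printing Implicit Defensive.
Import Order.TTheory GRing.Theory Num.Theory.
Local Open Scope classical_set_scope.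
Local Open Scope ring_scope.

Section funrposneg_pointwise.
Variables (T : Type) (R : realDomainType) (f g : T -> R) (x : T).

Lemma funrpos_le_norm : f^\+ x <= `|f x|.
Proof. by rewrite /funrpos ge_max ler_norm normr_ge0. Qed.

Lemma funrneg_le_norm : f^\- x <= `|f x|.
Proof. by rewrite /funrneg ge_max -normrN ler_norm normr_ge0. Qed.

Lemma funrposD_le : (f \+ g)^\+ x <= f^\+ x + g^\+ x.
Proof.
by rewrite /funrpos ge_max addr_ge0 ?le_max ?lexx ?orbT // andbT lerD // le_max lexx.
Qed.

Lemma funrnegD_le : (f \+ g)^\- x <= f^\- x + g^\- x.
Proof.
by rewrite /funrneg ge_max addr_ge0 ?le_max ?lexx ?orbT // andbT opprD lerD // le_max lexx.
Qed.

Lemma funrposDnegD :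
  (f \+ g)^\+ x + (f^\- x + g^\- x) = (f \+ g)^\- x + (f^\+ x + g^\+ x).
Proof.
have pn h : h^\+ x - h^\- x = h x by exact: (congr1 (fun F => F x) (funrposBneg h)).
have := pn _ (f \+ g); have := pn _ f; have := pn _ g; rewrite /= => ? ? ?; lra.
Qed.

End funrposneg_pointwise.

Lemma exists_grid_between (R : realType) (a b : R) : 0 <= a -> a < b ->
  exists n k : nat, a <= k%:R / n.+1%:R /\ k.+1%:R / n.+1%:R <= b.
Proof.
(* The grid step 1/N is less than (b - a)/2 and the grid point k/N lies just above a. *)
move=> a0 ab.
pose n := Num.truncn (2 / (b - a)); pose N : R := n.+1%:R.
have N0 : 0 < N by rewrite ltr0Sn.
have gap : 2 < N * (b - a).
  by have := truncnS_gt (2 / (b - a)); rewrite ltr_pdivrMr ?subr_gt0.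
exists n, (Num.truncn (a * N)).+1; split.
  by rewrite ler_pdivlMr //; exact/ltW/(truncnS_gt (a * N)).
have : (Num.truncn (a * N))%:R <= a * N by rewrite truncn_le mulr_ge0 // ltW.
rewrite ler_pdivrMr // -addn2 natrD; lra.
Qed.

Lemma exists_grid_between_ereal (R : realType) (u v : \bar R) :
  (0 <= u)%E -> (u < v)%E ->
  exists n k : nat, (u <= (k%:R / n.+1%:R)%:E)%E /\ ((k.+1%:R / n.+1%:R)%:E <= v)%E.
Proof.
case: u => [a a0 av|_|//]; last by rewrite ltNge leey.
have {}a0 : 0 <= a by rewrite -lee_fin.
have [b [ab bv]] : exists b, a < b /\ (b%:E <= v)%E.
  by case: v av => [b||] //; [exists b | exists (a + 1); rewrite ltrDl ltr01 leey].
have [n [k [akn kbn]]] := exists_grid_between a0 ab.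
by exists n, k; rewrite lee_fin akn (le_trans _ bv) ?lee_fin.
Qed.

Local Open Scope ereal_scope.
Section paper_arithmetic.
Variable R : realType.
Implicit Types x y : \bar R.

Lemma paddC x y : padd x y = padd y x.
Proof. by case: x => [r||]; case: y => [s||] //=; rewrite addeC. Qed.

Lemma oppe_padd x y : - padd x y = padd (- x) (- y).
Proof. by case: x => [r||]; case: y => [s||] //=; rewrite ?oppr0 // -EFinD opprD. Qed.

Lemma oppe_psub x y : - psub x y = psub y x.
Proof. by rewrite /psub oppe_padd oppeK paddC. Qed.

Lemma ge0_le_fin_num x y : 0 <= x -> x <= y -> y \is a fin_num -> x \is a fin_num.
Proof.
by move=> x0 xy; rewrite !ge0_fin_numE ?(le_trans x0) //; exact: le_lt_trans xy.
Qed.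

Lemma psub_padd_fin (sp sm xp xm yp ym : \bar R) :
  sp \is a fin_num -> sm \is a fin_num -> xp \is a fin_num ->
  xm \is a fin_num -> yp \is a fin_num -> ym \is a fin_num ->
  sp + (xm + ym) = sm + (xp + yp) ->
  psub sp sm = padd (psub xp xm) (psub yp ym).
Proof.
move=> /EFin_fin_numP[a ->] /EFin_fin_numP[b ->] /EFin_fin_numP[c ->].
move=> /EFin_fin_numP[e ->] /EFin_fin_numP[f ->] /EFin_fin_numP[g ->].
rewrite -!EFinD => -[eq_parts]; rewrite /psub /padd /= -!EFinD; congr EFin; lra.
Qed.

Lemma psub_padd_pinfty (sp sm xm yp ym : \bar R) :
  0 <= sp -> 0 <= yp -> sm \is a fin_num -> xm \is a fin_num -> ym \is a fin_num ->
  sp + (xm + ym) = sm + (+oo + yp) ->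
  psub sp sm = padd (psub +oo xm) (psub yp ym).
Proof.
move=> sp0 yp0 /EFin_fin_numP[a ->] /EFin_fin_numP[b ->] /EFin_fin_numP[c ->].
rewrite addye ?(gt_eqF (lt_le_trans ltNy0 yp0)) // addey // -EFinD.
by case: sp sp0 => [r _|_|//]; [rewrite -EFinD | case: yp yp0 => [r||]].
Qed.

(* The condition defining F = F_1 u ... u F_5 at one point, for xp = E(X^+|H)(x), ...,
   ya = E(|Y| | H)(x). *)
Definition sum_rule_cases (xp xm yp ym xa ya : \bar R) : Prop :=
  ((((xa \is a fin_num /\ ya \is a fin_num)
    \/ xp = +oo /\ xm \is a fin_num /\ ym \is a fin_num)
    \/ xm = +oo /\ xp \is a fin_num /\ yp \is a fin_num)
    \/ yp = +oo /\ xm \is a fin_num /\ ym \is a fin_num)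
    \/ ym = +oo /\ xp \is a fin_num /\ yp \is a fin_num.

Lemma psub_padd_of_parts (sp sm xp xm yp ym xa ya : \bar R) :
  0 <= sp -> 0 <= sm -> 0 <= xp -> 0 <= xm -> 0 <= yp -> 0 <= ym ->
  xp <= xa -> xm <= xa -> yp <= ya -> ym <= ya ->
  sp <= xp + yp -> sm <= xm + ym -> sp + (xm + ym) = sm + (xp + yp) ->
  sum_rule_cases xp xm yp ym xa ya ->
  psub sp sm = padd (psub xp xm) (psub yp ym).
Proof.
move=> sp0 sm0 xp0 xm0 yp0 ym0 xpa xma ypa yma spD smD eqD.
have sp_fin : xp \is a fin_num -> yp \is a fin_num -> sp \is a fin_num.
  by move=> xpf ypf; apply: (ge0_le_fin_num sp0 spD); rewrite fin_numD xpf ypf.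
have sm_fin : xm \is a fin_num -> ym \is a fin_num -> sm \is a fin_num.
  by move=> xmf ymf; apply: (ge0_le_fin_num sm0 smD); rewrite fin_numD xmf ymf.
have swap_signs : psub sm sp = padd (psub xm xp) (psub ym yp) ->
    psub sp sm = padd (psub xp xm) (psub yp ym).
  by rewrite -[psub sp sm]oppe_psub -[psub xp xm]oppe_psub -[psub yp ym]oppe_psub
    -oppe_padd => ->.
(* F_3 and F_5 are F_2 and F_4 with all signs flipped; F_4 is F_2 with X and Y exchanged. *)
case=> [[[[[xaf yaf]|[xpy [xmf ymf]]]|[xmy [xpf ypf]]]|[ypy [xmf ymf]]]|[ymy [xpf ypf]]].
- have [xpf xmf] := (ge0_le_fin_num xp0 xpa xaf, ge0_le_fin_num xm0 xma xaf).
  have [ypf ymf] := (ge0_le_fin_num yp0 ypa yaf, ge0_le_fin_num ym0 yma yaf).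
  by apply: psub_padd_fin => //; [exact: sp_fin | exact: sm_fin].
- by rewrite xpy in eqD *; apply: psub_padd_pinfty => //; exact: sm_fin.
- apply: swap_signs; rewrite xmy in eqD *; move/esym: eqD => eqD.
  by apply: psub_padd_pinfty => //; exact: sp_fin.
- rewrite paddC ypy; rewrite ypy [xm + _]addeC [xp + _]addeC in eqD.
  by apply: psub_padd_pinfty => //; exact: sm_fin.
- apply: swap_signs; rewrite paddC ymy.
  rewrite ymy [xm + _]addeC [xp + _]addeC in eqD; move/esym: eqD => eqD.
  by apply: psub_padd_pinfty => //; exact: sp_fin.
Qed.

End paper_arithmetic.

Lemma integral_gap_measure0 d (T : measurableType d) (R : realType)
    (mu : {finite_measure set T -> \bar R}) (A : set T) (W1 W2 : T -> \bar R)
    (a b : R) :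
  measurable A -> measurable_fun A W1 -> measurable_fun A W2 ->
  (forall x, 0 <= W1 x) -> (forall x, 0 <= W2 x) -> (0 <= a < b)%R ->
  (forall x, A x -> W2 x <= a%:E) -> (forall x, A x -> b%:E <= W1 x) ->
  \int[mu]_(x in A) W1 x <= \int[mu]_(x in A) W2 x -> mu A = 0.
Proof.
move=> mA mW1 mW2 W10 W20 /andP[a0 ab] W2a W1b le12.
have lower : b%:E * mu A <= \int[mu]_(x in A) W1 x.
  rewrite -integral_cst //; apply: ge0_le_integral => //.
  by move=> x _; rewrite lee_fin (le_trans a0) ?ltW.
have upper : \int[mu]_(x in A) W2 x <= a%:E * mu A.
  by rewrite -integral_cst //; apply: ge0_le_integral.
have := le_trans lower (le_trans le12 upper).
have : 0 <= mu A by [].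
have /EFin_fin_numP[p ->] : mu A \is a fin_num by rewrite fin_num_measure.
rewrite -!EFinM !lee_fin => p0 bpa; congr EFin; nra.
Qed.

Section sub_sigma_algebra.
Context d (T : measurableType d) (R : realType) (P : probability T R).
Variable H : set (set T).
Hypothesis HS : is_sub_sigma_algebra H.

Let H_measurableE : H.-sigma.-measurable = H := measurable_g_measurableTypeE HS.1.

Lemma H_measurableP (W : T -> \bar R) :
  H_measurable H W <-> measurable_fun [set: g_sigma_algebraType H] W.
Proof.
split=> [hW _ B mB|hW B mB]; first by rewrite setTI H_measurableE; exact: hW.
by have := hW measurableT B mB; rewrite setTI H_measurableE.
Qed.

Lemma H_measurableW (W : T -> \bar R) : H_measurable H W -> measurable_fun setT W.
Proof. by move=> hW _ B mB; rewrite setTI; exact/HS.2/hW. Qed.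

Lemma H_setI (A B : set T) : H A -> H B -> H (A `&` B).
Proof. by rewrite -H_measurableE; exact: measurableI. Qed.

Lemma H_setU (A B : set T) : H A -> H B -> H (A `|` B).
Proof. by rewrite -H_measurableE; exact: measurableU. Qed.

Lemma H_measurable_infty_c (W : T -> \bar R) c :
  H_measurable H W -> H [set x | W x <= c].
Proof.
move=> /H_measurableP mW; rewrite -H_measurableE -[X in measurable X]setTI.
exact: emeasurable_fun_infty_c.
Qed.

Lemma H_measurable_c_infty (W : T -> \bar R) c :
  H_measurable H W -> H [set x | c <= W x].
Proof.
move=> /H_measurableP mW; rewrite -H_measurableE -[X in measurable X]setTI.
exact: emeasurable_fun_c_infty.
Qed.

Lemma H_measurable_fin_num (W : T -> \bar R) :
  H_measurable H W -> H [set x | W x \is a fin_num].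
Proof.
move=> /H_measurableP mW; rewrite -H_measurableE -[X in measurable X]setTI.
exact: emeasurable_fin_num.
Qed.

Lemma H_measurable_eqy (W : T -> \bar R) : H_measurable H W -> H [set x | W x = +oo].
Proof.
have -> : [set x | W x = +oo] = [set x | +oo <= W x].
  by apply/seteqP; split => x /=; rewrite leye_eq => /eqP.
exact: H_measurable_c_infty.
Qed.

Lemma H_measurable_le_ae (W1 W2 : T -> \bar R) :
  (forall x, 0 <= W1 x) -> (forall x, 0 <= W2 x) ->
  H_measurable H W1 -> H_measurable H W2 ->
  (forall A, H A -> \int[P]_(x in A) W1 x <= \int[P]_(x in A) W2 x) ->
  {ae P, forall x, W1 x <= W2 x}.
Proof.
move=> W10 W20 hW1 hW2 leW.
pose gap n k := [set x | W2 x <= (k%:R / n.+1%:R)%:E] `&`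
                [set x | (k.+1%:R / n.+1%:R)%:E <= W1 x].
have Hgap n k : H (gap n k).
  by apply: H_setI; [exact: H_measurable_infty_c | exact: H_measurable_c_infty].
apply: (@negligibleS _ _ _ _ (\bigcup_n \bigcup_k gap n k)).
  move=> x /= /negP; rewrite -ltNge => lt21.
  have [n [k [W2k W1k]]] := exists_grid_between_ereal (W20 x) lt21.
  by exists n => //; exists k.
apply: negligible_bigcup => n; apply: negligible_bigcup => k.
have mgap := HS.2 _ (Hgap n k).
exists (gap n k); split => //.
apply: (integral_gap_measure0 (a := k%:R / n.+1%:R) (b := k.+1%:R / n.+1%:R) mgap).
- exact: measurable_funTS (H_measurableW hW1).
- exact: measurable_funTS (H_measurableW hW2).
- by [].
- by [].
- by rewrite divr_ge0 //= ltr_pM2r ?invr_gt0 ?ltr0Sn // ltr_nat.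
- by move=> x [].
- by move=> x [].
- exact: leW.
Qed.

Lemma is_cond_exp_ge0 (Z : T -> R) (W : T -> \bar R) :
  is_cond_exp P H Z W -> forall x, 0 <= W x.
Proof. by case. Qed.

Lemma is_cond_exp_H_measurable (Z : T -> R) (W : T -> \bar R) :
  is_cond_exp P H Z W -> H_measurable H W.
Proof. by case. Qed.

Lemma is_cond_expD (Z1 Z2 : T -> R) (W1 W2 : T -> \bar R) :
  (forall x, 0 <= Z1 x)%R -> (forall x, 0 <= Z2 x)%R ->
  measurable_fun setT Z1 -> measurable_fun setT Z2 ->
  is_cond_exp P H Z1 W1 -> is_cond_exp P H Z2 W2 ->
  is_cond_exp P H (Z1 \+ Z2)%R (W1 \+ W2).
Proof.
move=> Z10 Z20 mZ1 mZ2 [W10 hW1 iW1] [W20 hW2 iW2]; split.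
- by move=> x; exact: adde_ge0.
- move/H_measurableP : hW1 => hW1; move/H_measurableP : hW2 => hW2.
  by apply/H_measurableP; exact: emeasurable_funD.
move=> A HA; have mA := HS.2 _ HA.
have mZ (Z : T -> R) : measurable_fun setT Z -> measurable_fun A (EFin \o Z).
  by move=> mZ; apply/measurable_EFinP; exact: measurable_funTS mZ.
have mW (W : T -> \bar R) : H_measurable H W -> measurable_fun A W.
  by move=> hW; exact: measurable_funTS (H_measurableW hW).
have EZ_ge0 (Z : T -> R) : (forall x, 0 <= Z x)%R -> forall x, A x -> 0 <= (Z x)%:E.
  by move=> Z0 x _; rewrite lee_fin.
under eq_integral do rewrite EFinD.
rewrite ge0_integralD //.
- rewrite iW1 // iW2 // ge0_integralD //.
  + exact: mW.
  + exact: mW.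
- exact: EZ_ge0.
- exact: mZ.
- exact: EZ_ge0.
- exact: mZ.
Qed.

Lemma is_cond_exp_le_ae (Z1 Z2 : T -> R) (W1 W2 : T -> \bar R) :
  (forall x, 0 <= Z1 x)%R -> (forall x, Z1 x <= Z2 x)%R ->
  measurable_fun setT Z1 -> measurable_fun setT Z2 ->
  is_cond_exp P H Z1 W1 -> is_cond_exp P H Z2 W2 ->
  {ae P, forall x, W1 x <= W2 x}.
Proof.
move=> Z10 Z12 mZ1 mZ2 [W10 hW1 iW1] [W20 hW2 iW2].
apply: H_measurable_le_ae => // A HA; have mA := HS.2 _ HA.
rewrite -iW1 // -iW2 //; apply: ge0_le_integral => //.
- by move=> x _; rewrite lee_fin.
- by apply/measurable_EFinP; exact: measurable_funTS mZ1.
- by apply/measurable_EFinP; exact: measurable_funTS mZ2.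
- by move=> x _; rewrite lee_fin.
Qed.

Lemma is_cond_exp_eq_ae (Z1 Z2 : T -> R) (W1 W2 : T -> \bar R) :
  (forall x, 0 <= Z1 x)%R -> Z1 =1 Z2 -> measurable_fun setT Z1 ->
  is_cond_exp P H Z1 W1 -> is_cond_exp P H Z2 W2 ->
  {ae P, forall x, W1 x = W2 x}.
Proof.
move=> Z10 /funext<- mZ1 cW1 cW2.
have le12 := is_cond_exp_le_ae Z10 (fun x => lexx _) mZ1 mZ1 cW1 cW2.
have le21 := is_cond_exp_le_ae Z10 (fun x => lexx _) mZ1 mZ1 cW2 cW1.
by apply: filterS2 le12 le21 => x le12x le21x; apply: le_anti; rewrite le12x le21x.
Qed.

End sub_sigma_algebra.

Section conditional_expectation_of_sum.
Context d (T : measurableType d) (R : realType) (P : probability T R).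
Variable H : set (set T).
Hypothesis HS : is_sub_sigma_algebra H.
Variables (X Y : T -> R) (EXp EXm EYp EYm EXa EYa ESp ESm : T -> \bar R).
Hypotheses (mX : measurable_fun setT X) (mY : measurable_fun setT Y).
Hypotheses (cXp : is_cond_exp P H X^\+%R EXp) (cXm : is_cond_exp P H X^\-%R EXm).
Hypotheses (cYp : is_cond_exp P H Y^\+%R EYp) (cYm : is_cond_exp P H Y^\-%R EYm).
Hypotheses (cXa : is_cond_exp P H (fun x => `|X x|)%R EXa).
Hypotheses (cYa : is_cond_exp P H (fun x => `|Y x|)%R EYa).
Hypotheses (cSp : is_cond_exp P H (X \+ Y)^\+%R ESp).
Hypotheses (cSm : is_cond_exp P H (X \+ Y)^\-%R ESm).

Let ge0D (f g : T -> R) :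
  (forall x, 0 <= f x)%R -> (forall x, 0 <= g x)%R -> forall x, (0 <= (f \+ g) x)%R.
Proof. by move=> f0 g0 x; exact: addr_ge0. Qed.

Let mXY := measurable_funD mX mY.
Let mXp := measurable_funrpos mX.
Let mXm := measurable_funrneg mX.
Let mYp := measurable_funrpos mY.
Let mYm := measurable_funrneg mY.
Let mSp := measurable_funrpos mXY.
Let mSm := measurable_funrneg mXY.
Let mXa := measurableT_comp (@normr_measurable R setT) mX.
Let mYa := measurableT_comp (@normr_measurable R setT) mY.
Let cXYp := is_cond_expD HS (funrpos_ge0 X) (funrpos_ge0 Y) mXp mYp cXp cYp.
Let cXYm := is_cond_expD HS (funrneg_ge0 X) (funrneg_ge0 Y) mXm mYm cXm cYm.
Let ge0L := ge0D (funrpos_ge0 (X \+ Y)%R) (ge0D (funrneg_ge0 X) (funrneg_ge0 Y)).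
Let cL := is_cond_expD HS (funrpos_ge0 (X \+ Y)%R) (ge0D (funrneg_ge0 X) (funrneg_ge0 Y))
  mSp (measurable_funD mXm mYm) cSp cXYm.
Let cR := is_cond_expD HS (funrneg_ge0 (X \+ Y)%R) (ge0D (funrpos_ge0 X) (funrpos_ge0 Y))
  mSm (measurable_funD mXp mYp) cSm cXYp.

Lemma cond_exp_sum_ae : {ae P, forall x,
  sum_rule_cases (EXp x) (EXm x) (EYp x) (EYm x) (EXa x) (EYa x) ->
  psub (ESp x) (ESm x) = padd (psub (EXp x) (EXm x)) (psub (EYp x) (EYm x))}.
Proof.
have xpa := is_cond_exp_le_ae HS (funrpos_ge0 X) (funrpos_le_norm X) mXp mXa cXp cXa.
have xma := is_cond_exp_le_ae HS (funrneg_ge0 X) (funrneg_le_norm X) mXm mXa cXm cXa.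
have ypa := is_cond_exp_le_ae HS (funrpos_ge0 Y) (funrpos_le_norm Y) mYp mYa cYp cYa.
have yma := is_cond_exp_le_ae HS (funrneg_ge0 Y) (funrneg_le_norm Y) mYm mYa cYm cYa.
have spD := is_cond_exp_le_ae HS (funrpos_ge0 _) (funrposD_le X Y) mSp
  (measurable_funD mXp mYp) cSp cXYp.
have smD := is_cond_exp_le_ae HS (funrneg_ge0 _) (funrnegD_le X Y) mSm
  (measurable_funD mXm mYm) cSm cXYm.
have eqD := is_cond_exp_eq_ae HS ge0L (funrposDnegD X Y)
  (measurable_funD mSp (measurable_funD mXm mYm)) cL cR.
apply: filter_app xpa; apply: filter_app xma; apply: filter_app ypa.
apply: filter_app yma; apply: filter_app spD; apply: filter_app smD.
apply: filter_app eqD; apply: aeW => x eqD smD spD yma ypa xma xpa.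
have ge0 Z W : is_cond_exp P H Z W -> 0 <= W x by move=> /is_cond_exp_ge0.
exact: (psub_padd_of_parts (ge0 _ _ cSp) (ge0 _ _ cSm) (ge0 _ _ cXp)
  (ge0 _ _ cXm) (ge0 _ _ cYp) (ge0 _ _ cYm) xpa xma ypa yma spD smD eqD).
Qed.

End conditional_expectation_of_sum.

Theorem mainTheorem17 (d : measure_display) (T : measurableType d)
  (R : realType) (P : probability T R) (H : set (set T))
  (X Y : T -> R)
  (EXp EXm EYp EYm EXa EYa ESp ESm : T -> \bar R) :
  measure_is_complete P ->
  is_sub_sigma_algebra H ->
  complete_sub P H ->
  measurable_fun setT X -> measurable_fun setT Y ->
  is_cond_exp P H (fun x => (Num.max (X x) 0%R)%R) EXp ->
  is_cond_exp P H (fun x => (Num.max (- X x) 0%R)%R) EXm ->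
  is_cond_exp P H (fun x => (Num.max (Y x) 0%R)%R) EYp ->
  is_cond_exp P H (fun x => (Num.max (- Y x) 0%R)%R) EYm ->
  is_cond_exp P H (fun x => (`|X x|%R)%R) EXa ->
  is_cond_exp P H (fun x => (`|Y x|%R)%R) EYa ->
  is_cond_exp P H (fun x => (Num.max (X x + Y x) 0%R)%R) ESp ->
  is_cond_exp P H (fun x => (Num.max (- (X x + Y x)) 0%R)%R) ESm ->
  let F1 := [set x | is_real (EXa x) /\ is_real (EYa x)] in
  let F2 := [set x | EXp x = +oo /\ is_real (EXm x) /\ is_real (EYm x)] in
  let F3 := [set x | EXm x = +oo /\ is_real (EXp x) /\ is_real (EYp x)] in
  let F4 := [set x | EYp x = +oo /\ is_real (EXm x) /\ is_real (EYm x)] in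
  let F5 := [set x | EYm x = +oo /\ is_real (EXp x) /\ is_real (EYp x)] in
  let F := F1 `|` F2 `|` F3 `|` F4 `|` F5 in
  H F /\
  {ae P, forall x, F x ->
     psub (ESp x) (ESm x) = padd (psub (EXp x) (EXm x)) (psub (EYp x) (EYm x))}.
Proof.
move=> _ HS _ mX mY cXp cXm cYp cYm cXa cYa cSp cSm F1 F2 F3 F4 F5 F; split; last first.
  exact (cond_exp_sum_ae HS mX mY cXp cXm cYp cYm cXa cYa cSp cSm).
have Hfin Z W : is_cond_exp P H Z W -> H [set x | is_real (W x)].
  by move/is_cond_exp_H_measurable; exact: H_measurable_fin_num.
have Hinf Z W : is_cond_exp P H Z W -> H [set x | W x = +oo].
  by move/is_cond_exp_H_measurable; exact: H_measurable_eqy.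
have HF1 : H F1 := H_setI HS (Hfin _ _ cXa) (Hfin _ _ cYa).
have HF2 : H F2 := H_setI HS (Hinf _ _ cXp) (H_setI HS (Hfin _ _ cXm) (Hfin _ _ cYm)).
have HF3 : H F3 := H_setI HS (Hinf _ _ cXm) (H_setI HS (Hfin _ _ cXp) (Hfin _ _ cYp)).
have HF4 : H F4 := H_setI HS (Hinf _ _ cYp) (H_setI HS (Hfin _ _ cXm) (Hfin _ _ cYm)).
have HF5 : H F5 := H_setI HS (Hinf _ _ cYm) (H_setI HS (Hfin _ _ cXp) (Hfin _ _ cYp)).
exact (H_setU HS (H_setU HS (H_setU HS (H_setU HS HF1 HF2) HF3) HF4) HF5).
Qed.
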